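(* Let $n\ge 2$ be an integer and let $s$ be a positive integer with $2s \ge n + \frac{n}{\sqrt[4]{n}-1}$. Then \[ \frac{r_{2(s+1)}(n)}{n^{\frac{s}{2}}} \le \frac{r_{2s}(n)}{n^{\frac{s-1}{2}}}, \] i.e. $s\mapsto r_{2s}(n)/n^{(s-1)/2}$ is non-increasing on this range of $s$.
   Context: $r_s(n)=\#\{(x_1,\dots,x_s)\in\mathbb{Z}^s : x_1^2+\cdots+x_s^2=n\}$ is the number of representations of $n$ as a sum of $s$ squares. *)

From Stdlib Require Import Reals ZArith List Arith.
Import ListNotations.

Definition zrange (n : nat) : list Z :=
  map (fun k => (Z.of_nat k - Z.of_nat n)%Z) (seq 0 (2 * n + 1)).

Fixpoint box (s n : nat) : list (list Z) :=
  match s with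
  | O => [ [] ]
  | S s' => flat_map (fun x => map (cons x) (box s' n)) (zrange n)
  end.

Definition sumsq (v : list Z) : Z := fold_right (fun x acc => (x * x + acc)%Z) 0%Z v.

(* r_s(n) = #{ x in Z^s : x_1^2 + ... + x_s^2 = n }.
   Any solution has x_i^2 <= n, hence |x_i| <= n, so all solutions lie in
   the box [-n,n]^s, and each vector appears exactly once in [box s n]. *)
Definition r (s n : nat) : nat :=
  length (filter (fun v => Z.eqb (sumsq v) (Z.of_nat n)) (box s n)).

(* Let F_m(k) count the vectors of [-N,N]^m of squared norm k, so that
   r_m(n) = F_m(n) for N = n.  Splitting off the first coordinate,
   F_{m+1}(k) = sum_x F_m(k - x^2), and induction on m gives
   (m+1-k) F_{m+1}(k) <= (m+1) F_m(k): each term with x <> 0 is bounded by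
   the induction hypothesis at k - x^2 (as x^2 >= 1), and the term x = 0
   contributes the extra F_m(k).  Hence r_{m+1}(n) <= t r_m(n) with
   t = n^(1/4) as soon as n <= (t-1)(m+1-n), which the hypothesis on s
   guarantees for m = 2s and m = 2s+1; two such steps give the claim. *)
From Stdlib Require Import Reals ZArith List Arith Lia Lra Psatz.
Open Scope Z_scope.

Definition sumZ {A} (l : list A) (g : A -> Z) : Z :=
  fold_right (fun x acc => g x + acc) 0 l.

Lemma sumZ_app {A} (l1 l2 : list A) g : sumZ (l1 ++ l2) g = sumZ l1 g + sumZ l2 g.
Proof. induction l1; simpl; lia. Qed.

Lemma sumZ_le {A} (l : list A) f g : (forall x, f x <= g x) -> sumZ l f <= sumZ l g.
Proof. intros H; induction l as [|a l IH]; simpl; [lia|]. specialize (H a); lia. Qed.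

Lemma sumZ_add {A} (l : list A) f g : sumZ l (fun x => f x + g x) = sumZ l f + sumZ l g.
Proof. induction l; simpl; lia. Qed.

Lemma sumZ_mul {A} (l : list A) c f : sumZ l (fun x => c * f x) = c * sumZ l f.
Proof. induction l; simpl; lia. Qed.

Lemma sumZ_delta0_notin (l : list Z) c :
  ~ In 0 l -> sumZ l (fun x => if x =? 0 then c else 0) = 0.
Proof.
  induction l as [|x l IH]; intros H; simpl; auto.
  destruct (Z.eqb_spec x 0) as [->|_]; [exfalso; apply H; now left|].
  rewrite IH; [lia | intros Hl; apply H; now right].
Qed.

Lemma sumZ_zrange_delta0 N c : sumZ (zrange N) (fun x => if x =? 0 then c else 0) = c.
Proof.
  unfold zrange.
  replace (2 * N + 1)%nat with (N + (1 + N))%nat by lia.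
  rewrite seq_app, seq_app, !map_app, !sumZ_app.
  rewrite (sumZ_delta0_notin (map _ (seq 0 N))), (sumZ_delta0_notin (map _ (seq (0 + N + 1) N))).
  - simpl. rewrite Z.sub_diag. simpl. lia.
  - intros (i & Hi & Hin)%in_map_iff. apply in_seq in Hin. lia.
  - intros (i & Hi & Hin)%in_map_iff. apply in_seq in Hin. lia.
Qed.

Definition box_count (N m : nat) (k : Z) : Z :=
  Z.of_nat (length (filter (fun v => sumsq v =? k) (box m N))).

Lemma box_count_ge0 N m k : 0 <= box_count N m k.
Proof. unfold box_count; lia. Qed.

Lemma box_count_0 N k : box_count N 0 k = if 0 =? k then 1 else 0.
Proof. unfold box_count; simpl. destruct k; reflexivity. Qed.

Lemma length_filter_sumsq_cons (x k : Z) (B : list (list Z)) :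
  length (filter (fun v => sumsq v =? k) (map (cons x) B)) =
  length (filter (fun v => sumsq v =? k - x * x) B).
Proof.
  induction B as [|v B IH]; simpl; auto.
  replace (x * x + sumsq v =? k) with (sumsq v =? k - x * x).
  - destruct (sumsq v =? k - x * x); simpl; auto.
  - destruct (Z.eqb_spec (sumsq v) (k - x * x));
      destruct (Z.eqb_spec (x * x + sumsq v) k); lia.
Qed.

Lemma box_count_S N m k :
  box_count N (S m) k = sumZ (zrange N) (fun x => box_count N m (k - x * x)).
Proof.
  unfold box_count. simpl box. generalize (zrange N) as l.
  induction l as [|x l IH]; simpl; auto.
  rewrite filter_app, length_app, Nat2Z.inj_add, IH, length_filter_sumsq_cons.
  reflexivity.
Qed.

(* [G] stands for F_{m-1}; for m = 0 both hypotheses are vacuous in G. *)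
Lemma box_count_S_le_step N m G k :
  (forall j, (Z.of_nat m - j) * box_count N m j <= Z.of_nat m * G j) ->
  Z.of_nat m * sumZ (zrange N) (fun x => G (k - x * x)) = Z.of_nat m * box_count N m k ->
  (Z.of_nat m + 1 - k) * box_count N (S m) k <= (Z.of_nat m + 1) * box_count N m k.
Proof.
  intros Hprev Hrec. rewrite box_count_S, <- sumZ_mul.
  eapply Z.le_trans.
  - apply (sumZ_le _ _ (fun x => Z.of_nat m * G (k - x * x)
                                 + (if x =? 0 then box_count N m k else 0))).
    intros x. destruct (Z.eqb_spec x 0) as [->|Hx].
    + replace (k - 0 * 0) with k by lia. specialize (Hprev k).
      pose proof (box_count_ge0 N m k). nia.
    + specialize (Hprev (k - x * x)). pose proof (box_count_ge0 N m (k - x * x)).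
      assert (1 <= x * x) by nia. nia.
  - rewrite sumZ_add, sumZ_mul, Hrec, sumZ_zrange_delta0. lia.
Qed.

Lemma box_count_S_le N m k :
  (Z.of_nat m + 1 - k) * box_count N (S m) k <= (Z.of_nat m + 1) * box_count N m k.
Proof.
  revert k. induction m as [|m IH]; intros k.
  - apply (box_count_S_le_step N 0 (fun _ => 0)); [|reflexivity].
    intros j. rewrite box_count_0. destruct (Z.eqb_spec 0 j); subst; simpl; lia.
  - apply (box_count_S_le_step N (S m) (box_count N m)).
    + intros j. specialize (IH j). rewrite Nat2Z.inj_succ. lia.
    + now rewrite box_count_S.
Qed.

Close Scope Z_scope.
Open Scope R_scope.

Lemma r_S_le (m n : nat) :
  (INR m + 1 - INR n) * INR (r (S m) n) <= (INR m + 1) * INR (r m n).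
Proof.
  pose proof (box_count_S_le n m (Z.of_nat n)) as H.
  change (box_count n ?k (Z.of_nat n)) with (Z.of_nat (r k n)) in H.
  apply IZR_le in H.
  rewrite !mult_IZR, minus_IZR, !plus_IZR, <- !INR_IZR_INZ in H. exact H.
Qed.

Lemma r_S_le_mul (m n : nat) (t : R) :
  1 < t -> INR n <= (t - 1) * (INR m + 1 - INR n) -> INR (r (S m) n) <= t * INR (r m n).
Proof.
  intros Ht Hm.
  pose proof (r_S_le m n) as H.
  pose proof (pos_INR (r (S m) n)). pose proof (pos_INR (r m n)). pose proof (pos_INR n).
  assert (Hpos : 0 < INR m + 1 - INR n).
  { pose proof (pos_INR m).
    destruct (Rle_lt_dec (INR m + 1 - INR n) 0) as [Hle|]; [|assumption].
    assert ((t - 1) * (INR m + 1 - INR n) <= 0) by nra.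
    lra. }
  apply (Rmult_le_reg_l (INR m + 1 - INR n)); [exact Hpos|].
  assert (0 <= (t * (INR m + 1 - INR n) - (INR m + 1)) * INR (r m n))
    by (apply Rmult_le_pos; lra).
  nra.
Qed.

Theorem lemma3p1 (n s : nat) (hn : (2 <= n)%nat) (hs : (1 <= s)%nat)
  (hbound : 2 * INR s >= INR n + INR n / (Rpower (INR n) (1 / 4) - 1)) :
  INR (r (2 * (s + 1)) n) / Rpower (INR n) (INR s / 2)
    <= INR (r (2 * s) n) / Rpower (INR n) ((INR s - 1) / 2).
Proof.
  set (t := Rpower (INR n) (1 / 4)) in *.
  assert (Hn : 2 <= INR n) by (replace 2 with (INR 2) by (simpl; lra); apply le_INR; lia).
  assert (Ht : 1 < t).
  { unfold t. pose proof (Rpower_O (INR n)). pose proof (Rpower_lt (INR n) 0 (1 / 4)). lra. }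
  assert (Hgap : INR n <= (t - 1) * (2 * INR s - INR n)).
  { replace (INR n) with ((t - 1) * (INR n / (t - 1))) at 1 by (field; lra).
    apply Rmult_le_compat_l; lra. }
  assert (H1 : INR (r (S (2 * s)) n) <= t * INR (r (2 * s) n)).
  { apply r_S_le_mul; rewrite ?mult_INR; simpl (INR 2); nra. }
  assert (H2 : INR (r (S (S (2 * s))) n) <= t * INR (r (S (2 * s)) n)).
  { apply r_S_le_mul; rewrite ?S_INR, ?mult_INR; simpl (INR 2); nra. }
  replace (2 * (s + 1))%nat with (S (S (2 * s))) by lia.
  set (P := Rpower (INR n) ((INR s - 1) / 2)).
  replace (Rpower (INR n) (INR s / 2)) with (P * (t * t))
    by (unfold P, t; rewrite <- !Rpower_plus; f_equal; field).
  assert (HP : 0 < P) by (unfold P, Rpower; apply exp_pos).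
  pose proof (pos_INR (r (S (2 * s)) n)).
  assert (Htt : 0 < t * t) by (apply Rmult_lt_0_compat; lra).
  apply (Rmult_le_reg_r (P * (t * t))); [now apply Rmult_lt_0_compat|].
  replace (_ / (P * (t * t)) * (P * (t * t))) with (INR (r (S (S (2 * s))) n))
    by (field; split; lra).
  replace (_ / P * (P * (t * t))) with (INR (r (2 * s) n) * (t * t)) by (field; lra).
  nra.
Qed.
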